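(* Let $n\ge1$ and $d\ge1$ be integers, and let $\mu_n$ be a symmetric measure on $(\mathbb{R}^d)^n$ (i.e. invariant under permutations of the $n$ coordinates $\xi_1,\dots,\xi_n\in\mathbb{R}^d$). Then for any $0<s\le t$ and any measurable non-negative function $h$ on $(0,\infty)^n\times(\mathbb{R}^d)^n$ for which the integrals make sense, $$\sum_{\rho\in\Sigma_n}\int_{T_n(t)}\int_{T_n(s)}\int_{(\mathbb{R}^d)^n}h(t_1,\dots,t_n,\xi_1,\dots,\xi_n)\,h(s_1,\dots,s_n,\xi_{\rho(1)},\dots,\xi_{\rho(n)})\,\mu_n(d\xi_1\cdots d\xi_n)\,ds_1\cdots ds_n\,dt_1\cdots dt_n$$ $$\le\frac{s^n+t^n}{2}\int_{T_n(t)}\int_{(\mathbb{R}^d)^n}|h(t_1,\dots,t_n,\xi_1,\dots,\xi_n)|^2\mu_n(d\xi_1\cdots d\xi_n)\,dt_1\cdots dt_n.$$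
   Context: $\Sigma_n$ is the set of permutations of $\{1,\dots,n\}$, and $T_n(t)=\{(t_1,\dots,t_n):0<t_1<\dots<t_n<t\}$. *)

From HB Require Import structures.
From mathcomp Require Import all_boot all_order all_algebra all_fingroup.
From mathcomp Require Import all_classical all_reals all_analysis.
From mathcomp Require Import measurable_realfun.
Set Implicit Arguments. Unset Strict Implicit. Unset Printing Implicit Defensive.
Import Order.TTheory GRing.Theory Num.Theory.
Local Open Scope classical_set_scope.
Local Open Scope ring_scope.
Local Open Scope ereal_scope.

(* Points of R^d are d-tuples of reals (Borel product sigma-algebra);
   points of (R^d)^n are n-tuples of such. *)


Definition permute_tuple (T : Type) (n : nat) (rho : 'S_n) (xi : n.-tuple T)
  : n.-tuple T := [tuple tnth xi (rho i) | i < n].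

Definition symmetric_measure (R : realType) (d n : nat)
  (mu : {measure set (n.-tuple (d.-tuple R)) -> \bar R}) : Prop :=
  forall (rho : 'S_n) (A : set (n.-tuple (d.-tuple R))),
    measurable A -> mu (permute_tuple rho @^-1` A) = mu A.

(* Iterated Lebesgue integral over the simplex
   T_n(t) = {0 < t_1 < ... < t_n < t}:
   simplex_int n t f = \int_{0<t_n<t} ... \int_{0<t_1<t_2} f(t_1,...,t_n) dt_1 ... dt_n
   (innermost integration in t_1, outermost in t_n). *)
Fixpoint simplex_int (R : realType) (n : nat) : R -> (n.-tuple R -> \bar R) -> \bar R :=
  match n with
  | 0 => fun _ f => f [tuple]
  | k.+1 => fun t f =>
      \int[lebesgue_measure]_(u in `]0%R, t[)
         @simplex_int R k u (fun s : k.-tuple R => f [tuple of rcons s u])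
  end.

Definition sq_int (R : realType) (n d : nat)
  (mu : {measure set (n.-tuple (d.-tuple R)) -> \bar R})
  (h : n.-tuple R * n.-tuple (d.-tuple R) -> R) (tt : n.-tuple R) : \bar R :=
  \int[mu]_xi ((`|h (tt, xi)| ^+ 2)%:E).

Arguments simplex_int {R} n t f.

(* Pointwise, h(t,xi) h(s,rho xi) <= (h(t,xi)^2 + h(s,rho xi)^2) / 2, and since mu is
   invariant under xi |-> rho xi, the second square integrates to the same value as
   h(s,xi)^2.  With F(t) = \int h(t,xi)^2 mu(dxi), and since T_n(s) has volume s^n/n! and
   lies in T_n(t), the term of each rho is at most
     (s^n/n!) / 2 * \int_{T_n(t)} F + (t^n/n!) / 2 * \int_{T_n(s)} F
       <= (s^n + t^n) / (2 n!) * \int_{T_n(t)} F,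
   and there are n! permutations.
   The inner iterated integrals are not known to be measurable in the outer variables,
   so the integral is only used through inequalities valid for arbitrary non-negative
   integrands, read off its definition as a supremum over simple minorants. *)

From HB Require Import structures.
From mathcomp Require Import all_boot all_order all_algebra all_fingroup.
From mathcomp Require Import all_classical all_reals all_analysis.
From mathcomp Require Import measurable_realfun.
From mathcomp Require Import ring lra.

Set Implicit Arguments.
Unset Strict Implicit.
Unset Printing Implicit Defensive.

Import Order.TTheory GRing.Theory Num.Theory.
Local Open Scope classical_set_scope.
Local Open Scope ring_scope.

Section integral_nonmeasurable.
Import HBNNSimple.
Local Open Scope ereal_scope.
Context d (T : measurableType d) (R : realType) (mu : {measure set T -> \bar R}).
Implicit Types (D E : set T) (f g : T -> \bar R).

Lemma ge0_integral_le_nnsfun D f (M : \bar R) : (forall x, D x -> 0 <= f x) ->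
  (forall h : {nnsfun T >-> R}, (forall x, D x -> (h x)%:E <= f x) ->
     (forall x, ~ D x -> h x = 0%R) -> \int[mu]_x (h x)%:E <= M) ->
  \int[mu]_(x in D) f x <= M.
Proof.
move=> f0 hM; rewrite ge0_integralE//; apply: ge_ereal_sup => _ [h hf <-].
rewrite -integralT_nnsfun; apply: hM => x Dx.
  by have := hf x; rewrite patchT// mem_set.
apply/eqP; rewrite eq_le fun_ge0 andbT -lee_fin.
by have := hf x; rewrite patchC// mem_set.
Qed.

Lemma ge0_le_integral_nonmeas D f g : (forall x, D x -> 0 <= f x) ->
  (forall x, D x -> f x <= g x) ->
  \int[mu]_(x in D) f x <= \int[mu]_(x in D) g x.
Proof.
move=> f0 fg; have g0 x : D x -> 0 <= g x by move=> Dx; exact: le_trans (f0 x Dx) (fg x Dx).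
apply: ge0_integral_le_nnsfun => // h hf h_out.
rewrite integralT_nnsfun ge0_integralE//; apply: ereal_sup_ubound; exists h => // x.
have [Dx|Dx] := pselect (D x); first by rewrite patchT ?mem_set// (le_trans (hf x Dx)) ?fg.
by rewrite patchC ?mem_set// h_out.
Qed.

Lemma ge0_subset_integral_nonmeas D E f : (forall x, E x -> 0 <= f x) ->
  D `<=` E -> \int[mu]_(x in D) f x <= \int[mu]_(x in E) f x.
Proof.
move=> f0 DE; rewrite [leLHS]integral_mkcond [leRHS]integral_mkcond.
apply: ge0_le_integral_nonmeas => x _; rewrite /patch.
  by case: ifP => // /[1!inE] /DE; exact: f0.
case: ifPn => [/[1!inE] /DE Ex|_]; first by rewrite mem_set.
by case: ifP => // /[1!inE]; exact: f0.
Qed.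

Lemma ge0_integralZl_le D (a : R) f : measurable D -> (0 <= a)%R ->
  (forall x, D x -> 0 <= f x) ->
  \int[mu]_(x in D) (a%:E * f x) <= a%:E * \int[mu]_(x in D) f x.
Proof.
move=> mD a0 f0; have [->|a_neq0] := eqVneq a 0%R.
  by rewrite mul0e (eq_integral (cst 0)) ?integral0// => x _; rewrite mul0e.
have a_gt0 : (0 < a)%R by rewrite lt_def a_neq0.
apply: ge0_integral_le_nnsfun => [x Dx|h hf h_out]; first by rewrite mule_ge0 ?lee_fin ?f0.
rewrite (eq_integral (fun x => a%:E * (h x / a)%:E)); last first.
  by move=> x _; rewrite -EFinM mulrC divfK.
rewrite ge0_integralZl_EFin//; first last.
- by apply/measurable_EFinP; apply: measurable_funM.
- by move=> x _; rewrite lee_fin divr_ge0.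
rewrite lee_wpmul2l ?lee_fin// [leRHS]integral_mkcond.
apply: ge0_le_integral_nonmeas => [x _|x _]; first by rewrite lee_fin divr_ge0.
have [Dx|Dx] := pselect (D x); last by rewrite patchC ?mem_set// h_out// mul0r.
by rewrite patchT ?mem_set// -(@lee_pmul2l _ a%:E) ?lte_fin// -EFinM mulrC divfK ?hf.
Qed.

Lemma ge0_integralD_le D (psi : T -> R) f : measurable D -> measurable_fun D psi ->
  (forall x, D x -> (0 <= psi x)%R) -> (forall x, D x -> 0 <= f x) ->
  \int[mu]_(x in D) ((psi x)%:E + f x) <=
  \int[mu]_(x in D) (psi x)%:E + \int[mu]_(x in D) f x.
Proof.
move=> mD mpsi psi0 f0.
apply: ge0_integral_le_nnsfun => [x Dx|h hf h_out]; first by rewrite adde_ge0 ?lee_fin ?f0 ?psi0.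
have -> : \int[mu]_x (h x)%:E = \int[mu]_(x in D) (h x)%:E.
  rewrite [RHS]integral_mkcond; apply: eq_integral => x _.
  have [Dx|Dx] := pselect (D x); first by rewrite patchT ?mem_set.
  by rewrite patchC ?mem_set// h_out.
have mh : measurable_fun D h by exact: measurable_funS (measurable_funPT h).
(* On D, h <= psi + f: its part below psi is dominated by psi and its excess over psi by f. *)
rewrite (eq_integral (fun x => (Order.min (h x) (psi x))%:E +
                               (Order.max (h x - psi x) 0)%:E)); last first.
  move=> x _; rewrite -EFinD; congr (_%:E).
  have [hp|hp] := leP (h x) (psi x).
    by rewrite (@max_r _ _ _ 0%R) ?addr0// subr_le0.
  by rewrite max_l ?subr_ge0 ?ltW// addrC subrK.
have min_ge0 x : D x -> (0 <= Order.min (h x) (psi x))%R by move=> Dx; rewrite le_min fun_ge0 psi0.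
rewrite ge0_integralD//; last 3 first.
- by apply/measurable_EFinP; apply: measurable_minr.
- by move=> x _; rewrite lee_fin le_max lexx orbT.
- by apply/measurable_EFinP; apply: measurable_maxr => //; exact: measurable_funB.
apply: leeD; apply: ge0_le_integral_nonmeas => x Dx.
- by rewrite lee_fin min_ge0.
- by rewrite lee_fin ge_min lexx orbT.
- by rewrite lee_fin le_max lexx orbT.
have := hf x Dx; move: (f0 x Dx); case: (f x) => [r|_ _|//]; last exact: leey.
by rewrite -EFinD !lee_fin ge_max => r0 hr; rewrite r0 andbT lerBlDr addrC.
Qed.
End integral_nonmeasurable.

Section integral_invariant.
Local Open Scope ereal_scope.
Context d (T : measurableType d) (R : realType) (mu : {measure set T -> \bar R}).

Lemma ge0_integral_comp_invariant (phi : T -> T) (f : T -> \bar R) :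
  measurable_fun setT phi -> (forall A, measurable A -> mu (phi @^-1` A) = mu A) ->
  measurable_fun setT f -> (forall x, 0 <= f x) ->
  \int[mu]_x f (phi x) = \int[mu]_x f x.
Proof.
move=> mphi phi_inv mf f0.
have := ge0_integral_pushforward mphi mu measurableT mf (fun x _ => f0 x).
rewrite preimage_setT => <-; apply: eq_measure_integral => A mA _.
exact: phi_inv.
Qed.

Lemma ge0_integral_mul_le_sqr (f g : T -> R) :
  measurable_fun setT f -> measurable_fun setT g ->
  (forall x, 0 <= f x)%R -> (forall x, 0 <= g x)%R ->
  \int[mu]_x (f x * g x)%:E <=
  (2^-1)%:E * \int[mu]_x (f x ^+ 2)%:E + (2^-1)%:E * \int[mu]_x (g x ^+ 2)%:E.
Proof.
move=> mf mg f0 g0.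
have mhalf_sqr (k : T -> R) : measurable_fun setT k ->
    measurable_fun setT (fun x => (2^-1 * k x ^+ 2)%:E).
  by move=> mk; apply/measurable_EFinP; apply: measurable_funM => //; exact: measurable_funX.
have half_sqr_ge0 (k : T -> R) x : 0 <= (2^-1 * k x ^+ 2)%:E.
  by rewrite lee_fin mulr_ge0 ?sqr_ge0.
apply: le_trans (_ : _ <= \int[mu]_x ((2^-1 * f x ^+ 2)%:E + (2^-1 * g x ^+ 2)%:E)) _.
  apply: ge0_le_integral => //.
  - by move=> x _; rewrite lee_fin mulr_ge0.
  - by apply/measurable_EFinP; exact: measurable_funM.
  - by apply: emeasurable_funD; exact: mhalf_sqr.
  move=> x _; rewrite -EFinD lee_fin.
  by have := sqr_ge0 (f x - g x); lra.
rewrite ge0_integralD//; try exact: mhalf_sqr.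
under eq_integral do rewrite EFinM; under [X in _ + X]eq_integral do rewrite EFinM.
by rewrite !ge0_integralZl_EFin//;
  (apply/measurable_EFinP; exact: measurable_funX) || (move=> x _; rewrite lee_fin sqr_ge0).
Qed.

End integral_invariant.

Definition simplex_volume {R : realType} (k : nat) (u : R) : R := u ^+ k / k`!%:R.

Section simplex_int.
Context (R : realType).
Import numFieldNormedType.Exports.
Local Open Scope ereal_scope.

Lemma measurable_simplex_volume k : measurable_fun setT (@simplex_volume R k).
Proof. by apply: measurable_funM => //; exact: measurable_fun_pow. Qed.

Lemma simplex_volume_ge0 k (u : R) : (0 <= u)%R -> (0 <= simplex_volume k u)%R.
Proof. by move=> u0; rewrite divr_ge0 ?exprn_ge0. Qed.

Lemma integral_simplex_volume k (u : R) : (0 <= u)%R ->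
  \int[lebesgue_measure]_(x in `]0%R, u[) (simplex_volume k x)%:E =
  (simplex_volume k.+1 u)%:E.
Proof.
rewrite le_eqVlt => /predU1P[<-|u_gt0].
  by rewrite set_itv_ge ?integral_set0 ?bnd_simp// /simplex_volume expr0n mul0r.
have cont j : continuous (@simplex_volume R j).
  by move=> x; apply: cvgM; [exact: exprn_continuous | exact: cvg_cst].
rewrite -(@integral_itv_bndoo _ _ _ _ true false); last first.
  by apply/measurable_EFinP; apply: measurable_funS (measurable_simplex_volume k).
rewrite (@continuous_FTC2 _ _ (@simplex_volume R k.+1))//.
- by rewrite /simplex_volume expr0n /= mul0r sube0.
- exact: continuous_subspaceT (cont k).
- split.
  + by move=> y _; apply: derivableM => //; exact: exprn_derivable.
  + by apply: cvg_at_right_filter; exact: cont.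
  + by apply: cvg_at_left_filter; exact: cont.
- move=> x _; rewrite derive1Mr; last exact: exprn_derivable.
  rewrite exp_derive1 /simplex_volume factS natrM invfM.
  rewrite -[(k.+1%:R *: _)%R]/(k.+1%:R * x ^+ k)%R; field.
  by rewrite pnatr_eq0 -lt0n fact_gt0 /= -(natrD _ 1 k) pnatr_eq0.
Qed.

Lemma simplex_int_ge0 k (t : R) (f : k.-tuple R -> \bar R) :
  (forall x, 0 <= f x) -> 0 <= simplex_int k t f.
Proof.
elim: k t f => [|k IH] t f f0 /=; first exact: f0.
by apply: integral_ge0 => u _; apply: IH => s.
Qed.

Lemma le_simplex_int k (t : R) (f g : k.-tuple R -> \bar R) :
  (forall x, 0 <= f x) -> (forall x, f x <= g x) ->
  simplex_int k t f <= simplex_int k t g.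
Proof.
elim: k t f g => [|k IH] t f g f0 fg /=; first exact: fg.
apply: ge0_le_integral_nonmeas => u _; first exact: simplex_int_ge0.
by apply: IH => s.
Qed.

Lemma le_simplex_int_time k (s t : R) (f : k.-tuple R -> \bar R) : (s <= t)%R ->
  (forall x, 0 <= f x) -> simplex_int k s f <= simplex_int k t f.
Proof.
case: k f => [|k] f st f0 //=.
apply: ge0_subset_integral_nonmeas => [u _|u]; first exact: simplex_int_ge0.
by rewrite /= !in_itv/= => /andP[-> us]; exact: lt_le_trans us st.
Qed.

Lemma simplex_intZl_le k (t a : R) (f : k.-tuple R -> \bar R) : (0 <= a)%R ->
  (forall x, 0 <= f x) -> simplex_int k t (fun x => a%:E * f x) <= a%:E * simplex_int k t f.
Proof.
elim: k t f => [|k IH] t f a0 f0 /=; first exact: lexx.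
apply: le_trans (_ : _ <= \int[lebesgue_measure]_(u in `]0%R, t[)
    (a%:E * simplex_int k u (fun s => f [tuple of rcons s u]))) _.
  apply: ge0_le_integral_nonmeas => u _; last exact: IH.
  by apply: simplex_int_ge0 => x; rewrite mule_ge0 ?lee_fin.
by apply: ge0_integralZl_le => // u _; exact: simplex_int_ge0.
Qed.

Lemma simplex_intDc_le k (t c : R) (f : k.-tuple R -> \bar R) : (0 <= t)%R -> (0 <= c)%R ->
  (forall x, 0 <= f x) ->
  simplex_int k t (fun x => c%:E + f x) <= (c * simplex_volume k t)%:E + simplex_int k t f.
Proof.
elim: k t f => [|k IH] t f t0 c0 f0 /=.
  by rewrite /simplex_volume expr0 fact0 divr1 mulr1.
set S := fun u => simplex_int k u (fun s => f [tuple of rcons s u]).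
have mV : measurable_fun `]0%R, t[ (fun u => c * simplex_volume k u)%R.
  by apply: measurable_funM => //; exact: measurable_funS (measurable_simplex_volume k).
have V0 u : [set` `]0%R, t[] u -> (0 <= c * simplex_volume k u)%R.
  rewrite /= in_itv/= => /andP[u0 _]; apply: mulr_ge0 => //; exact: simplex_volume_ge0 (ltW u0).
apply: le_trans (_ : _ <= \int[lebesgue_measure]_(u in `]0%R, t[)
    ((c * simplex_volume k u)%:E + S u)) _.
  apply: ge0_le_integral_nonmeas => u.
    by move=> _; apply: simplex_int_ge0 => x; rewrite adde_ge0 ?lee_fin.
  by rewrite /= in_itv/= => /andP[u0 _]; apply: IH => //; exact: ltW.
apply: le_trans (_ : _ <= \int[lebesgue_measure]_(u in `]0%R, t[) (c * simplex_volume k u)%:E +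
    \int[lebesgue_measure]_(u in `]0%R, t[) S u) _.
  by apply: ge0_integralD_le => // u _; exact: simplex_int_ge0.
under eq_integral do rewrite EFinM.
rewrite ge0_integralZl_EFin ?integral_simplex_volume//.
- by move=> u; rewrite /= in_itv/= => /andP[u0 _]; rewrite lee_fin simplex_volume_ge0 ?ltW.
- by apply/measurable_EFinP; exact: measurable_funS (measurable_simplex_volume k).
Qed.

End simplex_int.

Lemma measurable_permute_tuple {d} (T : measurableType d) {n} (rho : 'S_n) :
  measurable_fun setT (@permute_tuple T n rho).
Proof.
apply/measurable_fun_tnthP => i.
rewrite (_ : _ \o _ = @tnth _ _ ^~ (rho i)); first exact: measurable_tnth.
by apply: funext => xi /=; rewrite /permute_tuple tnth_mktuple.
Qed.

Section cross_term.
Local Open Scope ereal_scope.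
Context (R : realType) (n d : nat) (mu : {measure set (n.-tuple (d.-tuple R)) -> \bar R}).
Hypothesis mu_sym : symmetric_measure mu.
Context (h : n.-tuple R * n.-tuple (d.-tuple R) -> R).
Hypotheses (h_meas : measurable_fun setT h) (h_ge0 : forall z, (0 <= h z)%R).
Context (s t : R).
Hypotheses (s_gt0 : (0 < s)%R) (s_le_t : (s <= t)%R).

Local Notation F := (sq_int mu h).
Local Notation cross rho tt :=
  (fun ss => \int[mu]_xi ((h (tt, xi) * h (ss, permute_tuple rho xi))%:E)).

Lemma sq_int_ge0 tt : 0 <= F tt.
Proof. by apply: integral_ge0 => xi _; rewrite lee_fin sqr_ge0. Qed.

Lemma cross_ge0 rho tt ss : 0 <= cross rho tt ss.
Proof. by apply: integral_ge0 => xi _; rewrite lee_fin mulr_ge0. Qed.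

Lemma cross_le rho tt ss : cross rho tt ss <= (2^-1)%:E * F tt + (2^-1)%:E * F ss.
Proof.
have mh y : measurable_fun setT (fun xi => h (y, xi)).
  exact: measurableT_comp h_meas (pair1_measurable y).
have mperm := measurable_permute_tuple (T := d.-tuple R) rho.
have F_sqr y : F y = \int[mu]_xi ((h (y, xi) ^+ 2)%:E).
  by apply: eq_integral => xi _; rewrite ger0_norm.
rewrite !F_sqr -(ge0_integral_comp_invariant (f := fun xi => (h (ss, xi) ^+ 2)%:E) mperm).
- apply: ge0_integral_mul_le_sqr => //.
  exact: measurableT_comp (mh ss) mperm.
- by move=> A mA; exact: mu_sym.
- by apply/measurable_EFinP; exact: measurable_funX.
- by move=> xi; rewrite lee_fin sqr_ge0.
Qed.

Lemma simplex_int_cross_le rho tt (x : R) : simplex_int n t F = x%:E ->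
  simplex_int n s (cross rho tt) <=
  (2^-1 * simplex_volume n s)%:E * F tt + (2^-1 * x)%:E.
Proof.
move=> Fx.
apply: le_trans (le_simplex_int _ (cross_ge0 rho tt) (cross_le rho tt)) _.
have := sq_int_ge0 tt; case: (F tt) => [r r0| _|//]; last first.
  by rewrite [X in _ <= X + _]gt0_muley ?addye ?leey// lte_fin mulr_gt0 ?invr_gt0// divr_gt0 ?exprn_gt0.
rewrite lee_fin in r0.
have half_F : simplex_int n s (fun ss => (2^-1)%:E * F ss) <= (2^-1 * x)%:E.
  apply: le_trans (simplex_intZl_le _ _ sq_int_ge0) _; first by rewrite invr_ge0.
  by rewrite EFinM -Fx lee_wpmul2l ?lee_fin ?invr_ge0// le_simplex_int_time//; exact: sq_int_ge0.
rewrite -EFinM; apply: le_trans (simplex_intDc_le (ltW s_gt0) _ _) _.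
- by rewrite mulr_ge0 ?invr_ge0.
- by move=> ss; rewrite mule_ge0 ?lee_fin ?invr_ge0 ?sq_int_ge0.
by rewrite -EFinM mulrAC leeD.
Qed.

Lemma simplex_int2_cross_le rho (x : R) : simplex_int n t F = x%:E ->
  simplex_int n t (fun tt => simplex_int n s (cross rho tt)) <=
  (2^-1 * (simplex_volume n s + simplex_volume n t) * x)%:E.
Proof.
move=> Fx; have x0 : (0 <= x)%R by rewrite -lee_fin -Fx simplex_int_ge0//; exact: sq_int_ge0.
have Vs0 : (0 <= 2^-1 * simplex_volume n s)%R.
  by rewrite mulr_ge0 ?invr_ge0 ?simplex_volume_ge0 ?ltW.
apply: le_trans (_ : _ <= simplex_int n t (fun tt =>
    (2^-1 * x)%:E + (2^-1 * simplex_volume n s)%:E * F tt)) _.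
  apply: le_simplex_int => tt; first by apply: simplex_int_ge0; exact: cross_ge0.
  by rewrite addeC; exact: simplex_int_cross_le.
apply: le_trans (simplex_intDc_le (le_trans (ltW s_gt0) s_le_t) _ _) _.
- by rewrite mulr_ge0 ?invr_ge0.
- by move=> tt; rewrite mule_ge0 ?lee_fin ?sq_int_ge0.
apply: le_trans (leeD2l _ (simplex_intZl_le _ Vs0 sq_int_ge0)) _.
by rewrite Fx -!EFinM -EFinD lee_fin; lra.
Qed.

End cross_term.

Theorem lemmaA1 (R : realType) (n d : nat) (n_ge1 : (0 < n)%N) (d_ge1 : (0 < d)%N)
  (mu : {measure set (n.-tuple (d.-tuple R)) -> \bar R})
  (mu_sym : symmetric_measure mu)
  (s t : R) (s_gt0 : 0 < s) (s_le_t : s <= t)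
  (h : n.-tuple R * n.-tuple (d.-tuple R) -> R)
  (h_meas : measurable_fun setT h)
  (h_ge0 : forall z, 0 <= h z)
  (h2_meas : measurable_fun setT (sq_int mu h)) :
  (\sum_(rho : 'S_n)
     simplex_int n t (fun tt =>
       simplex_int n s (fun ss =>
         \int[mu]_xi ((h (tt, xi) * h (ss, permute_tuple rho xi))%:E)))
   <= ((s ^+ n + t ^+ n) / 2)%:E * simplex_int n t (sq_int mu h))%E.
Proof.
case Fx: (simplex_int n t (sq_int mu h)) => [x| |].
- have per_rho rho := simplex_int2_cross_le mu_sym h_meas h_ge0 s_gt0 s_le_t rho Fx.
  apply: le_trans (_ : _ <= \sum_(rho : 'S_n)
    (2^-1 * (simplex_volume n s + simplex_volume n t) * x)%:E)%E _.
    by apply: lee_sum => rho _; exact: per_rho.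
  rewrite sumEFin sumr_const card_Sn -EFinM lee_fin.
  suff -> : 2^-1 * (simplex_volume n s + simplex_volume n t) * x *+ n`! =
            (s ^+ n + t ^+ n) / 2 * x by [].
  rewrite /simplex_volume -mulr_natr; field.
  by rewrite pnatr_eq0 -lt0n fact_gt0.
- rewrite gt0_muley ?leey// lte_fin divr_gt0// ltr_pwDl ?exprn_gt0// exprn_ge0//.
  exact: le_trans (ltW s_gt0) s_le_t.
- by have := simplex_int_ge0 t (sq_int_ge0 mu h); rewrite Fx.
Qed.
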